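(* Let $T$ be an $\mathbb{N}$-tableau and let $\widehat{T}$ be its image under the toggle map defined in the context. Then the image of the transpose $T^t$ under the toggle map is $\widehat{T}^t$.
   Context: Partitions are drawn in English notation with matrix coordinates: the box in row $i$ and column $j$ is $(i,j)$. An $\mathbb{N}$-tableau of shape $\lambda$ is an assignment of a nonnegative integer to each box of $\lambda$; its transpose $T^t$ has shape the conjugate partition $\lambda'$ and entry $t_{ji}$ at $(i,j)$. A corner box of a partition is a box $(i,j)$ such that neither $(i+1,j)$ nor $(i,j+1)$ is a box. The toggle map $T\mapsto\widehat{T}$ is defined recursively: $\widehat{\emptyset}=\emptyset$; if $T'$ is obtained from $T$ by adding a corner box $(i,j)$ (of $\mathrm{sh}(T')$) with entry $x$, then $\widehat{T'}$ is obtained from $\widehat{T}$ as follows. For $k\ge1$ let $\beta_k,\gamma_k,\alpha_k$ be the entries of $\widehat{T}$ at $(i-k,j-k)$, $(i-k+1,j-k)$, $(i-k,j-k+1)$ respectively (taken to be $0$ if the box is not in $\mathrm{sh}(T)$). Then $\widehat{T'}$ agrees with $\widehat{T}$ except that for $1\le k<\min(i,j)$ the entry at $(i-k,j-k)$ becomes $\max(\alpha_{k+1},\gamma_{k+1})+\min(\alpha_k,\gamma_k)-\beta_k$, and the entry at $(i,j)$ is $\max(\alpha_1,\gamma_1)+x$. This is independent of the order in which boxes are added. *)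

From mathcomp Require Import all_boot all_order all_algebra.
Set Implicit Arguments. Unset Strict Implicit. Unset Printing Implicit Defensive.
Import Order.TTheory GRing.Theory Num.Theory.

(* Partitions: weakly decreasing sequences of positive parts; row r (1-indexed)
   has length nth 0 lam (r-1).  Boxes are (row, column), both 1-indexed. *)
Definition is_partition (lam : seq nat) : bool :=
  sorted (fun a b => b <= a) lam && all (fun x => 0 < x) lam.

Definition in_shape (lam : seq nat) (i j : nat) : bool :=
  (0 < i <= size lam) && (0 < j <= nth 0 lam i.-1).

Definition conj_part (lam : seq nat) : seq nat :=
  mkseq (fun c => count (fun x => c < x) lam) (head 0 lam).

(* An N-tableau of shape lam is given by its entries t i j at the boxes (i,j)
   of lam (values off the shape are irrelevant).  Transpose: entry t j i at (i,j). *)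
Definition transpose {A} (t : nat -> nat -> A) : nat -> nat -> A :=
  fun i j => t j i.

(* Boxes of lam in row reading order (row by row, left to right).  Each box,
   when added in this order, is a corner box of the shape built so far. *)
Definition boxes (lam : seq nat) : seq (nat * nat) :=
  flatten [seq [seq (i.+1, j.+1) | j <- iota 0 (nth 0 lam i)] | i <- iota 0 (size lam)].

Local Open Scope ring_scope.

(* One step of the toggle map: the current toggled tableau has shape given by
   the list [added] of its boxes and entries [h]; we add the corner box (i,j)
   with entry x.  Entries off the current shape are read as 0.  Computed in int. *)
Definition toggle_step (x : nat) (st : seq (nat * nat) * (nat -> nat -> int))
    (ij : nat * nat) : seq (nat * nat) * (nat -> nat -> int) :=
  let: (added, h) := st in
  let: (i, j) := ij in
  let v a b : int := if (a, b) \in added then h a b else 0 in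
  let h' a b : int :=
    if (a == i) && (b == j) then Num.max (v i.-1 j) (v i j.-1) + x%:Z
    else if [&& (a < i)%N, (b < j)%N, (i - a == j - b)%N & (i - a < minn i j)%N]
    then (* a = i-k, b = j-k, 1 <= k < min(i,j) *)
      Num.max (v a.-1 b) (v a b.-1) + Num.min (v a b.+1) (v a.+1 b) - v a b
    else h a b in
  (rcons added (i, j), h').

Definition toggle (lam : seq nat) (t : nat -> nat -> nat) : nat -> nat -> int :=
  (foldl (fun st ij => toggle_step (t ij.1 ij.2) st ij)
         ([::], fun _ _ => 0) (boxes lam)).2.

(* Adding the corner box (i, j) changes only entries on the diagonal of (i, j)
   and reads only entries on that diagonal and the two adjacent ones.  Hence
   adding two boxes whose diagonals are at distance at least 2 commutes, and
   since two incomparable boxes (for the componentwise order) are always that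
   far apart, every order of addition that is a linear extension of the
   componentwise order yields the same tableau.  A single step commutes with
   transposition, as max and min are symmetric in alpha_k and gamma_k.  So the
   toggle of T^t, computed in row order of lam', is the transpose of the
   toggle of T computed in column order of lam, which equals its toggle
   computed in row order. *)

From mathcomp Require Import all_boot all_order all_algebra zify.
Set Implicit Arguments. Unset Strict Implicit. Unset Printing Implicit Defensive.
Import Order.TTheory.
Local Open Scope ring_scope.

(* A state of [toggle]: the boxes added so far and the entries, which are junk
   off those boxes; [entry] reads them as 0 there. *)
Definition state := (seq (nat * nat) * (nat -> nat -> int))%type.

Definition state_eqv (s1 s2 : state) := s1.1 =i s2.1 /\ s1.2 =2 s2.2.

Definition entry (s : state) a b : int := if (a, b) \in s.1 then s.2 a b else 0.

Definition state0 : state := ([::], fun _ _ => 0).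

Definition toggle_by (t : nat -> nat -> nat) (s : state) (c : nat * nat) : state :=
  toggle_step (t c.1 c.2) s c.

Definition toggle_below (i j a b : nat) : bool :=
  [&& (a < i)%N, (b < j)%N, (i - a == j - b)%N & (i - a < minn i j)%N].

Definition toggle_support (i j a b : nat) : bool :=
  ((a == i) && (b == j)) || toggle_below i j a b.

Lemma toggle_stepE x (s : state) i j : toggle_step x s (i, j) =
  (rcons s.1 (i, j), fun a b =>
    if (a == i) && (b == j) then Num.max (entry s i.-1 j) (entry s i j.-1) + x%:Z
    else if toggle_below i j a b then
      Num.max (entry s a.-1 b) (entry s a b.-1) + Num.min (entry s a b.+1) (entry s a.+1 b)
      - entry s a b
    else s.2 a b).
Proof. by case: s. Qed.

Lemma state_eqv_sym s1 s2 : state_eqv s1 s2 -> state_eqv s2 s1.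
Proof. by move=> [E1 E2]; split => [p|a b]; rewrite ?E1 ?E2. Qed.

Lemma state_eqv_trans s1 s2 s3 : state_eqv s1 s2 -> state_eqv s2 s3 -> state_eqv s1 s3.
Proof. by move=> [E1 E2] [E3 E4]; split => [p|a b]; rewrite ?E1 ?E2. Qed.

Lemma toggle_step_eqv x s1 s2 c :
  state_eqv s1 s2 -> state_eqv (toggle_step x s1 c) (toggle_step x s2 c).
Proof.
case: c => i j [E1 E2].
have Eentry p q : entry s1 p q = entry s2 p q by rewrite /entry E1 E2.
split; first by move=> p; rewrite !toggle_stepE /= !mem_rcons !in_cons E1.
by move=> a b; rewrite !toggle_stepE /= !Eentry E2.
Qed.

Lemma foldl_toggle_eqv t l s1 s2 :
  state_eqv s1 s2 -> state_eqv (foldl (toggle_by t) s1 l) (foldl (toggle_by t) s2 l).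
Proof. by elim: l s1 s2 => //= c l IHl s1 s2 E; apply/IHl/toggle_step_eqv. Qed.

Lemma toggle_support_diag i j a b : toggle_support i j a b -> (b + i = a + j)%N.
Proof. rewrite /toggle_support /toggle_below; lia. Qed.

Lemma toggle_step_notin_support x s i j a b :
  ~~ toggle_support i j a b -> (toggle_step x s (i, j)).2 a b = s.2 a b.
Proof.
by rewrite toggle_stepE /toggle_support /= => /norP[/negbTE -> /negbTE ->].
Qed.

Lemma entry_toggle_step_offdiag x s i j p q :
  (q + i != p + j)%N -> entry (toggle_step x s (i, j)) p q = entry s p q.
Proof.
move=> off_diag; rewrite {1}/entry toggle_step_notin_support; last first.
  by apply: contra off_diag => /toggle_support_diag ->.
rewrite toggle_stepE /= mem_rcons in_cons xpair_eqE /entry.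
by have -> : (p == i) && (q == j) = false by apply/negbTE; apply: contra off_diag; lia.
Qed.

Definition near_diag (i j p q : nat) : bool :=
  (q + i <= p + j + 1)%N && (p + j <= q + i + 1)%N.

Lemma toggle_step_local x s s' i j a b :
  (forall p q, near_diag i j p q -> entry s p q = entry s' p q) ->
  toggle_support i j a b ->
  (toggle_step x s (i, j)).2 a b = (toggle_step x s' (i, j)).2 a b.
Proof.
move=> E supp; rewrite !toggle_stepE /=.
case: ifP => [_|not_corner]; first by rewrite !E // /near_diag; lia.
case: ifP => diag; last by move: supp; rewrite /toggle_support not_corner diag.
by rewrite !E // /near_diag; move: diag; rewrite /toggle_below; lia.
Qed.

Definition far_diag (c1 c2 : nat * nat) : bool :=
  (c1.1 + c2.2 + 2 <= c1.2 + c2.1)%N || (c1.2 + c2.1 + 2 <= c1.1 + c2.2)%N.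

Lemma toggle_step_commute x1 x2 s c1 c2 : far_diag c1 c2 ->
  state_eqv (toggle_step x1 (toggle_step x2 s c2) c1)
            (toggle_step x2 (toggle_step x1 s c1) c2).
Proof.
case: c1 c2 => [i1 j1] [i2 j2]; rewrite /far_diag /= => far.
split=> [p|a b].
  by rewrite !toggle_stepE /= !mem_rcons !in_cons !mem_rcons !in_cons orbCA.
have [supp1|not_supp1] := boolP (toggle_support i1 j1 a b).
  rewrite (toggle_step_notin_support _ _ (i := i2)); last first.
    by apply/negP => /toggle_support_diag; move: (toggle_support_diag supp1); lia.
  apply: toggle_step_local => // p q; rewrite /near_diag => near.
  by rewrite entry_toggle_step_offdiag //; lia.
have [supp2|not_supp2] := boolP (toggle_support i2 j2 a b).
  rewrite (toggle_step_notin_support _ _ (i := i1)) //.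
  apply: toggle_step_local => // p q; rewrite /near_diag => near.
  by rewrite entry_toggle_step_offdiag //; lia.
by rewrite !toggle_step_notin_support.
Qed.

Definition transpose_state (s : state) : state :=
  (map swap_pair s.1, transpose s.2).

Lemma entry_transpose_state s p q : entry (transpose_state s) p q = entry s q p.
Proof. by rewrite /entry -[(p, q)]/(swap_pair (q, p)) mem_map //; apply: can_inj swap_pairK. Qed.

Lemma toggle_step_transpose x s i j :
  state_eqv (toggle_step x (transpose_state s) (j, i))
            (transpose_state (toggle_step x s (i, j))).
Proof.
split=> [p|a b]; first by rewrite !toggle_stepE /= map_rcons.
rewrite toggle_stepE [in RHS]toggle_stepE /= /transpose !entry_transpose_state.
case: ifP => [/andP[/eqP -> /eqP ->]|not_corner]; first by rewrite !eqxx maxC.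
rewrite (andbC (b == i)) not_corner.
case: ifP => diag; case: ifP => diag' //; first by rewrite maxC minC.
all: by move: diag diag'; rewrite /toggle_below; lia.
Qed.

Lemma foldl_toggle_transpose t l s :
  state_eqv (foldl (toggle_by (transpose t)) (transpose_state s) (map swap_pair l))
            (transpose_state (foldl (toggle_by t) s l)).
Proof.
elim: l s => //= -[i j] l IHl s; apply: state_eqv_trans (IHl _).
exact/foldl_toggle_eqv/toggle_step_transpose.
Qed.

Definition box_lt (c1 c2 : nat * nat) : bool :=
  [&& (c1.1 <= c2.1)%N, (c1.2 <= c2.2)%N & c1 != c2].

Definition linear_ext (l : seq (nat * nat)) : bool :=
  pairwise (fun c1 c2 => ~~ box_lt c2 c1) l.

Lemma incomparable_far_diag c1 c2 :
  c1 != c2 -> ~~ box_lt c1 c2 -> ~~ box_lt c2 c1 -> far_diag c1 c2.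
Proof.
case: c1 c2 => [a b] [c d] ne; rewrite /box_lt /far_diag /= ne eq_sym ne !andbT.
lia.
Qed.

Lemma foldl_toggle_move_front t c p q s : all (far_diag c) p ->
  state_eqv (foldl (toggle_by t) s (p ++ c :: q)) (foldl (toggle_by t) s (c :: p ++ q)).
Proof.
elim: p s => //= c' p IHp s /andP[far_c' far_p].
apply: state_eqv_trans (IHp _ far_p) _.
exact/foldl_toggle_eqv/toggle_step_commute.
Qed.

(* The head of [l1] is minimal, so in [l2] it is preceded only by boxes
   incomparable to it; these lie on diagonals at distance at least 2 from it,
   so it can be moved to the front of [l2]. *)
Lemma foldl_toggle_perm t l1 l2 s :
  perm_eq l1 l2 -> uniq l2 -> linear_ext l1 -> linear_ext l2 ->
  state_eqv (foldl (toggle_by t) s l1) (foldl (toggle_by t) s l2).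
Proof.
elim: l1 l2 s => [|c l1 IHl] l2 s; first by move=> /perm_size /esym /size0nil ->.
move=> perm12 uniq2 /= /andP[c_min ext1] ext2.
have c_l2 : c \in l2 by rewrite -(perm_mem perm12) mem_head.
move: perm12 uniq2 ext2; case/splitPr: c_l2 => p q perm12 uniq2 ext2.
have perm_front : perm_eq (p ++ c :: q) (c :: p ++ q) by rewrite -[c :: q]cat1s perm_catCA.
have far_p : all (far_diag c) p.
  apply/allP => c' c'_p.
  have ne : c != c'.
    by apply: contraTneq uniq2 => ->; rewrite cat_uniq /= c'_p andbF.
  have : c' \in c :: l1 by rewrite (perm_mem perm12) mem_cat c'_p.
  rewrite in_cons eq_sym (negbTE ne) => c'_l1.
  apply: incomparable_far_diag ne _ (allP c_min _ c'_l1).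
  by move: ext2; rewrite /linear_ext pairwise_cat => /andP[/allrelP ->] //; rewrite mem_head.
apply: state_eqv_trans (state_eqv_sym (foldl_toggle_move_front t q s far_p)).
apply: IHl => //.
- by rewrite -(perm_cons c) (perm_trans perm12).
- by move: uniq2; rewrite (perm_uniq perm_front) => /andP[].
- move: ext2; rewrite /linear_ext !pairwise_cat /= => /and4P[ext_pq -> _ ->].
  rewrite !andbT; apply/allrelP => u v u_p v_q; apply: (allrelP ext_pq) => //.
  by rewrite in_cons v_q orbT.
Qed.

Definition lex_lt (c1 c2 : nat * nat) : bool :=
  (c1.1 < c2.1)%N || ((c1.1 == c2.1) && (c1.2 < c2.2)%N).

Lemma boxes_lex_sorted lam : pairwise lex_lt (boxes lam).
Proof.
rewrite /boxes; set f := nth 0 lam; elim: (size lam) {2}0%N => [|n IHn] m //=.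
rewrite pairwise_cat IHn andbT; apply/andP; split.
  apply/allrelP => _ _ /mapP[j _ ->] /flatten_mapP[i] /[!mem_iota] i_gt /mapP[k _ ->].
  by rewrite /lex_lt /=; lia.
rewrite pairwise_map.
have := iota_ltn_sorted 0 (f m); rewrite sorted_pairwise; last exact: ltn_trans.
by apply: sub_pairwise => u v /= ltuv; rewrite /lex_lt /=; lia.
Qed.

Lemma uniq_boxes lam : uniq (boxes lam).
Proof.
by apply: pairwise_uniq (boxes_lex_sorted lam) => c; rewrite /lex_lt !ltnn andbF.
Qed.

Lemma linear_ext_boxes lam : linear_ext (boxes lam).
Proof.
apply: sub_pairwise (boxes_lex_sorted lam) => -[a b] [c d].
by rewrite /lex_lt /box_lt /= xpair_eqE; lia.
Qed.

Lemma mem_boxes lam a b : ((a, b) \in boxes lam) = in_shape lam a b.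
Proof.
rewrite /in_shape; apply/flatten_mapP/idP => [[i]|].
  by rewrite mem_iota => i_lt /mapP[j]; rewrite mem_iota => j_lt [-> ->] /=; lia.
move=> /andP[/andP[a_gt a_le] /andP[b_gt b_le]].
exists a.-1; first by rewrite mem_iota; lia.
by apply/mapP; exists b.-1; rewrite ?mem_iota; [lia | congr pair; lia].
Qed.

Lemma nth_le_head_geq (l : seq nat) k : sorted geq l -> (nth 0 l k <= head 0 l)%N.
Proof.
move=> sorted_l; have [k_lt|k_ge] := ltnP k (size l); last by rewrite nth_default.
have geq_trans : transitive geq by move=> ? ? ? /= h1 h2; exact: leq_trans h2 h1.
rewrite -nth0; apply: (sorted_leq_nth geq_trans leqnn) => //; rewrite inE; lia.
Qed.

Lemma count_gt_sorted_geq (l : seq nat) c a : sorted geq l ->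
  (a < count (fun x => c < x) l)%N = (c < nth 0 l a)%N.
Proof.
elim: l a => [|x l IHl] a sorted_xl; first by rewrite nth_nil.
have [c_lt|x_le] := ltnP c x.
  case: a => [|a] /=; first by rewrite c_lt.
  by rewrite c_lt add1n ltnS IHl // (path_sorted sorted_xl).
have -> : count (fun x => c < x)%N (x :: l) = 0%N.
  apply/eqP; rewrite -leqn0 leqNgt -has_count; apply/hasP => -[y /(nthP 0%N)[k _ <-]].
  by have := nth_le_head_geq k sorted_xl => /=; lia.
by have := nth_le_head_geq a sorted_xl => /=; lia.
Qed.

Lemma in_shape_conj_part lam a b : is_partition lam ->
  in_shape (conj_part lam) b a = in_shape lam a b.
Proof.
move=> /andP[sorted_lam _]; rewrite /in_shape /conj_part size_mkseq.
have nth_le := nth_le_head_geq a.-1 sorted_lam.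
have [b_in|b_out] := boolP (0 < b <= head 0 lam)%N; last first.
  by apply/esym/negP => /andP[/andP[a_gt a_le] /andP[b_gt b_le]]; move: b_out; lia.
rewrite nth_mkseq; last by lia.
have := count_gt_sorted_geq b.-1 a.-1 sorted_lam.
have a_size : (b <= nth 0 lam a.-1 -> a <= size lam)%N.
  by apply: contraTT; rewrite -!ltnNge => a_gt; rewrite nth_default //; lia.
by move: b_in a_size; case: a nth_le => [|a] /=; lia.
Qed.

Lemma linear_ext_swap l : linear_ext (map swap_pair l) = linear_ext l.
Proof.
rewrite /linear_ext pairwise_map; apply: eq_pairwise => -[a b] [c d].
by rewrite /relpre /box_lt /= !xpair_eqE /= [(d == b) && _]andbC andbCA.
Qed.

Lemma perm_swap_boxes_conj_part lam : is_partition lam ->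
  perm_eq (map swap_pair (boxes (conj_part lam))) (boxes lam).
Proof.
move=> lam_part; have swap_inj := can_inj (@swap_pairK nat nat).
apply: uniq_perm; rewrite ?(map_inj_uniq swap_inj) ?uniq_boxes //.
move=> [a b]; rewrite -[(a, b)]/(swap_pair (b, a)) (mem_map swap_inj).
by rewrite !mem_boxes in_shape_conj_part.
Qed.

Theorem proposition2p7 (lam : seq nat) (t : nat -> nat -> nat) :
  is_partition lam ->
  forall i j : nat, in_shape (conj_part lam) i j ->
    toggle (conj_part lam) (transpose t) i j = transpose (toggle lam t) i j.
Proof.
(* The identity holds at every (i, j), inside the shape or not. *)
move=> lam_part i j _.
pose cols := map swap_pair (boxes (conj_part lam)).
have perm_cols : perm_eq cols (boxes lam) by exact: perm_swap_boxes_conj_part.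
have ext_cols : linear_ext cols by rewrite linear_ext_swap linear_ext_boxes.
rewrite /toggle -(mapK swap_pairK (boxes (conj_part lam))) -/cols.
rewrite (foldl_toggle_transpose t cols state0).2.
exact: (foldl_toggle_perm t state0 perm_cols (uniq_boxes lam) ext_cols (linear_ext_boxes lam)).2.
Qed.
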